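(* Let $(M,g)$ and $(N,h)$ be Riemannian manifolds, $\dim M=m$, and $f:M\to N$ a smooth map such that $\tilde g=g-f^*h$ is positive definite. Let $b:M\to[0,1)$ be the largest eigenvalue of $f^*h$ with respect to $g$. Let $X_1,\dots,X_m$ be a local $g$-orthonormal frame, $\tilde g_{ij}=g(X_i,X_j)-h(df(X_i),df(X_j))$ with inverse $(\tilde g^{ij})$, and define \[ W=\mathrm{trace}_{g-f^*h}(\nabla df)=\sum_{i,j}\tilde g^{ij}\nabla df(X_i,X_j)\in C^\infty(f^{-1}TN),\qquad Z=\sum_{i,j}\tilde g^{ij}h(W,df(X_i))X_j\in C^\infty(TM). \] Then $\|Z\|\leq \frac{\sqrt b}{1-b}\|W\|$ and $\|W\|\leq\frac{\sqrt m}{1-b}\|\nabla df\|$.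
   Context: $\nabla df$ is the second fundamental form of $f$ (computed with the Levi-Civita connections of $g$ and $h$), with norm $\|\nabla df\|^2=\sum_{i,j}h(\nabla df(X_i,X_j),\nabla df(X_i,X_j))$; norms of $Z$ and $W$ are taken with respect to $g$ and $h$ respectively. *)

From mathcomp Require Import all_boot all_order all_algebra.
From mathcomp Require Import reals.
Set Implicit Arguments. Unset Strict Implicit. Unset Printing Implicit Defensive.
Import Order.TTheory GRing.Theory Num.Theory.
Local Open Scope ring_scope.

(* Pointwise model: at a point p of M we fix a g-orthonormal frame X_1..X_m of
   T_pM and an h-orthonormal basis of T_{f(p)}N (dim n).  Then
   - df(X_i) is the row i of A : 'M_(m,n);
   - nabla df(X_i,X_j) is B i j : 'rV_n. *)

Definition dotv (R : realType) (n : nat) (u v : 'rV[R]_n) : R := (u *m v^T) 0 0.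
Definition normv (R : realType) (n : nat) (u : 'rV[R]_n) : R := Num.sqrt (dotv u u).

Definition pullback_mx (R : realType) (m n : nat) (A : 'M[R]_(m, n)) : 'M[R]_m :=
  A *m A^T.

Definition gtilde_mx (R : realType) (m n : nat) (A : 'M[R]_(m, n)) : 'M[R]_m :=
  1%:M - pullback_mx A.

Definition posdef_mx (R : realType) (m : nat) (S : 'M[R]_m) : Prop :=
  forall v : 'rV[R]_m, v != 0 -> 0 < (v *m S *m v^T) 0 0.

Definition largest_eigenvalue (R : realType) (m : nat) (S : 'M[R]_m) (b : R) : Prop :=
  eigenvalue S b /\ (forall a : R, eigenvalue S a -> a <= b).

Definition Wvec (R : realType) (m n : nat) (A : 'M[R]_(m, n))
  (B : 'I_m -> 'I_m -> 'rV[R]_n) : 'rV[R]_n :=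
  \sum_(i < m) \sum_(j < m) (invmx (gtilde_mx A)) i j *: B i j.

Definition Zvec (R : realType) (m n : nat) (A : 'M[R]_(m, n))
  (B : 'I_m -> 'I_m -> 'rV[R]_n) : 'rV[R]_m :=
  \row_(j < m) \sum_(i < m) (invmx (gtilde_mx A)) i j * dotv (Wvec A B) (row i A).

Definition norm2ff (R : realType) (m n : nat) (B : 'I_m -> 'I_m -> 'rV[R]_n) : R :=
  Num.sqrt (\sum_(i < m) \sum_(j < m) dotv (B i j) (B i j)).

From mathcomp Require Import all_boot all_order all_algebra.
From mathcomp Require Import reals ring lra complex.

(* Let S = A A^T be the matrix of f^*h in the frame, so that gtilde = 1 - S.
   Diagonalising S shows x S x^T <= b |x|^2 for every x.  Hence, by
   Cauchy-Schwarz, |w A^T| <= sqrt b |w|, and x gtilde x^T >= (1 - b) |x|^2,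
   which gives |y gtilde^-1| <= |y| / (1 - b).  The components of Z are those of
   (W A^T) gtilde^-1, which yields the first estimate.  W is the combination of
   the nabla df(X_i, X_j) with coefficients gtilde^{ij}; every row of gtilde^-1
   has norm at most 1 / (1 - b), so these coefficients have l2-norm at most
   sqrt m / (1 - b), and Cauchy-Schwarz yields the second estimate. *)

Set Implicit Arguments.
Unset Strict Implicit.
Unset Printing Implicit Defensive.
Import Order.TTheory GRing.Theory Num.Theory.
Local Open Scope ring_scope.

Lemma sum_mul_sqr_le (R : realFieldType) (I : finType) (a c : I -> R) :
  (\sum_i a i * c i) ^+ 2 <= (\sum_i a i ^+ 2) * (\sum_i c i ^+ 2).
Proof.
set A := \sum_i a i ^+ 2; set AC := \sum_i a i * c i; set C := \sum_i c i ^+ 2.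
have quad_ge0 t : 0 <= t ^+ 2 * A - 2 * t * AC + C.
  have -> : t ^+ 2 * A - 2 * t * AC + C = \sum_i (t * a i - c i) ^+ 2.
    rewrite (eq_bigr (fun i => t ^+ 2 * a i ^+ 2 - 2 * t * (a i * c i) + c i ^+ 2));
      last by move=> i _; ring.
    by rewrite !big_split /= sumrN -!mulr_sumr.
  by apply: sumr_ge0 => i _; apply: sqr_ge0.
have A_ge0 : 0 <= A by apply: sumr_ge0 => i _; apply: sqr_ge0.
have C_ge0 : 0 <= C by apply: sumr_ge0 => i _; apply: sqr_ge0.
have [A0 | A_neq0] := eqVneq A 0.
  have a0 i : a i = 0.
    apply/eqP; rewrite -sqrf_eq0; apply/eqP.
    by move/psumr_eq0P: A0; apply=> // j _; apply: sqr_ge0.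
  rewrite /AC big1 => [|i _]; last by rewrite a0 mul0r.
  by rewrite expr0n /= A0 mul0r.
have A_gt0 : 0 < A by rewrite lt_def A_neq0 A_ge0.
have := quad_ge0 (AC / A); have : AC / A * A = AC by rewrite mulfVK.
nra.
Qed.

Lemma le_of_sqr_le_mul (R : realDomainType) (a c : R) :
  0 <= c -> a ^+ 2 <= c * a -> a <= c.
Proof. by move=> c_ge0 a_sqr_le; nra. Qed.

Section RowDot.
Variables (R : realType) (n : nat).
Implicit Types u v : 'rV[R]_n.

Lemma dotvE u v : dotv u v = \sum_k u 0 k * v 0 k.
Proof. by rewrite /dotv mxE; apply: eq_bigr => k _; rewrite mxE. Qed.

Lemma dotvv u : dotv u u = \sum_k u 0 k ^+ 2.
Proof. by rewrite dotvE; apply: eq_bigr => k _; rewrite expr2. Qed.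

Lemma dotv_ge0 u : 0 <= dotv u u.
Proof. by rewrite dotvv; apply: sumr_ge0 => k _; apply: sqr_ge0. Qed.

Lemma dotv_eq0 u : (dotv u u == 0) = (u == 0).
Proof.
apply/idP/idP => [|/eqP->]; last by rewrite dotvv big1 // => k _; rewrite mxE expr0n.
rewrite dotvv => /eqP/psumr_eq0P u0; apply/eqP/rowP => k; rewrite mxE.
by apply/eqP; rewrite -sqrf_eq0; apply/eqP; apply: u0 => // j _; apply: sqr_ge0.
Qed.

Lemma normv_ge0 u : 0 <= normv u.
Proof. exact: sqrtr_ge0. Qed.

Lemma sqr_normv u : normv u ^+ 2 = dotv u u.
Proof. by rewrite sqr_sqrtr // dotv_ge0. Qed.

Lemma dotv_le_normv u v : dotv u v <= normv u * normv v.
Proof.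
rewrite (le_trans (ler_norm _)) // -sqrtrM ?dotv_ge0 // -sqrtr_sqr.
by rewrite ler_wsqrtr // dotvE !dotvv sum_mul_sqr_le.
Qed.

Lemma normv_sum_scale_le (I : finType) (c : I -> R) (u : I -> 'rV[R]_n) :
  normv (\sum_p c p *: u p) <=
    Num.sqrt (\sum_p c p ^+ 2) * Num.sqrt (\sum_p dotv (u p) (u p)).
Proof.
rewrite -sqrtrM ?sumr_ge0 // => [|p _]; last exact: sqr_ge0.
apply: ler_wsqrtr; rewrite dotvv.
under eq_bigr => k _ do (rewrite summxE; under eq_bigr => p _ do rewrite mxE).
apply: (@le_trans _ _ (\sum_k (\sum_p c p ^+ 2) * \sum_p u p 0 k ^+ 2)).
  by apply: ler_sum => k _; apply: sum_mul_sqr_le.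
rewrite -mulr_sumr exchange_big.
apply: ler_wpM2l; first by apply: sumr_ge0 => p _; apply: sqr_ge0.
by apply: ler_sum => p _; rewrite dotvv.
Qed.

Lemma normv_delta (i : 'I_n) : normv (delta_mx 0 i : 'rV[R]_n) = 1.
Proof.
rewrite /normv dotvv (bigD1 i) //= big1 => [|j j_neq_i]; last first.
  by rewrite mxE eqxx /= (negbTE j_neq_i) expr0n.
by rewrite addr0 mxE !eqxx expr1n sqrtr1.
Qed.

End RowDot.

Lemma posdef_mx_unit (R : realType) (m : nat) (S : 'M[R]_m) :
  posdef_mx S -> S \in unitmx.
Proof.
move=> S_pos; rewrite -row_free_unit -kermx_eq0; apply/eqP/row_matrixP => i.
rewrite row0; apply/eqP/negP => /negP ker_i.
by have := S_pos _ ker_i; rewrite -row_mul mulmx_ker row0 mul0mx mxE ltxx.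
Qed.

Lemma eigenvalue_spectral_diag (C : numClosedFieldType) (n : nat) (M : 'M[C]_n)
    (k : 'I_n) :
  M \is normalmx -> eigenvalue M (spectral_diag M 0 k).
Proof.
move=> /orthomx_spectralP M_spec; set P := spectralmx M in M_spec.
have P_unit : P \in unitmx := spectral_unit M.
apply/eigenvalueP; exists (row k P).
  have -> : row k P *m M = row k (diag_mx (spectral_diag M) *m P).
    by rewrite -row_mul {1}M_spec !mulmxA mulmxV // mul1mx.
  by rewrite row_mul row_diag_mx -scalemxAl -rowE.
rewrite rowE -(mul0mx _ P) (inj_eq (row_free_inj _)) ?row_free_unit //.
by apply/eqP => /matrixP/(_ 0 k)/eqP; rewrite !mxE !eqxx oner_eq0.
Qed.

Section RealSymmetric.
Variable R : realType.
Local Notation phi := (real_complex R).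
Local Open Scope sesquilinear_scope.

Lemma conjC_real_complex (r : R) : (phi r)^* = phi r.
Proof. by apply: conj_Creal; apply/complex_realP; exists r. Qed.

Lemma eigenvalue_map_real_complex (m : nat) (S : 'M[R]_m) (r : R) :
  eigenvalue (map_mx phi S) (phi r) = eigenvalue S r.
Proof. by rewrite !eigenvalue_root_char -map_char_poly fmorph_root. Qed.

Lemma map_real_complex_hermsymmx (m : nat) (S : 'M[R]_m) :
  S^T = S -> map_mx phi S \is hermsymmx.
Proof.
move=> S_sym; apply/is_hermitianmxP; rewrite expr0 scale1r.
by apply/matrixP => i j; rewrite !mxE -[in LHS]S_sym mxE conjC_real_complex.
Qed.

Lemma spectral_diag_le_largest_eigenvalue (m : nat) (S : 'M[R]_m) (b : R)
    (k : 'I_m) :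
  S^T = S -> largest_eigenvalue S b ->
  exists2 r, spectral_diag (map_mx phi S) 0 k = phi r & r <= b.
Proof.
move=> /map_real_complex_hermsymmx S_herm [_ b_max].
have /mxOverP/(_ 0 k)/complex_realP[r d_k] := hermitian_spectral_diag_real S_herm.
exists r => //; apply: b_max; rewrite -eigenvalue_map_real_complex -d_k.
exact/eigenvalue_spectral_diag/hermitian_normalmx.
Qed.

Lemma quad_le_largest_eigenvalue (m : nat) (S : 'M[R]_m) (b : R) (x : 'rV[R]_m) :
  S^T = S -> largest_eigenvalue S b -> (x *m S *m x^T) 0 0 <= b * dotv x x.
Proof.
(* Over C, S = P^-1 diag(d) P with P unitary; for y = x P^* both sides become
   sums over k of d_k |y_k|^2 and b |y_k|^2, and each d_k is an eigenvalue of S. *)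
move=> S_sym b_largest; set SC := map_mx phi S.
have /hermitian_normalmx/orthomx_spectralP SC_spec := map_real_complex_hermsymmx S_sym.
set P := spectralmx SC in SC_spec; set d := spectral_diag SC in SC_spec.
have P_unitary : P \is unitarymx := spectral_unitarymx SC.
set xC := map_mx phi x.
have phi_entry (M : 'M[R]_1) : phi (M 0 0) = map_mx phi M 0 0 by rewrite mxE.
have xC_tr : xC^T = xC^t* by apply/matrixP => i j; rewrite !mxE conjC_real_complex.
pose y := xC *m P^t*.
have y_norm : xC *m xC^T = y *m y^t*.
  rewrite /y trmx_mul map_mxM trmxCK mulmxA mulmxKtV //; congr (_ *m _); exact: xC_tr.
have y_quad : xC *m SC *m xC^T = y *m diag_mx d *m y^t*.
  rewrite /y /SC SC_spec invmx_unitary // trmx_mul map_mxM trmxCK !mulmxA.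
  by congr (_ *m _); exact: xC_tr.
rewrite -lecR rmorphM /dotv phi_entry [X in _ <= _ * X]phi_entry !map_mxM -!map_trmx.
rewrite -/SC -/xC y_quad y_norm.
rewrite mul_mx_diag !mxE mulr_sumr; apply: ler_sum => k _; rewrite !mxE.
have [r -> r_le_b] := spectral_diag_le_largest_eigenvalue k S_sym b_largest.
rewrite mulrAC [X in X <= _]mulrC.
by apply: ler_wpM2r; [rewrite mul_conjC_ge0 | rewrite lecR].
Qed.

End RealSymmetric.

Section Pullback.
Variables (R : realType) (m n : nat) (A : 'M[R]_(m, n)) (b : R).
Local Notation S := (pullback_mx A).
Local Notation G := (gtilde_mx A).
Hypothesis b_largest : largest_eigenvalue S b.

Lemma pullback_mx_sym : S^T = S.
Proof. by rewrite /pullback_mx trmx_mul trmxK. Qed.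

Lemma pullback_quad (x : 'rV[R]_m) : (x *m S *m x^T) 0 0 = dotv (x *m A) (x *m A).
Proof. by rewrite /dotv /pullback_mx trmx_mul !mulmxA. Qed.

Lemma gtilde_quad (x : 'rV[R]_m) :
  (x *m G *m x^T) 0 0 = dotv x x - (x *m S *m x^T) 0 0.
Proof. by rewrite /gtilde_mx mulmxBr mulmx1 mulmxBl mxE [X in _ + X]mxE. Qed.

Lemma pullback_eigenvalue_ge0 : 0 <= b.
Proof.
case: b_largest => /eigenvalueP[v v_eigen v_neq0] _.
have v_gt0 : 0 < dotv v v by rewrite lt_def dotv_eq0 v_neq0 dotv_ge0.
have := dotv_ge0 (v *m A); rewrite -pullback_quad v_eigen -scalemxAl mxE.
by rewrite pmulr_lge0.
Qed.

Lemma normv_mul_tr_le (w : 'rV[R]_n) : normv (w *m A^T) <= Num.sqrt b * normv w.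
Proof.
set v := w *m A^T.
have v_sqr : dotv v v = dotv w (v *m A) by rewrite /dotv [in RHS]trmx_mul mulmxA.
have vA_le : normv (v *m A) <= Num.sqrt b * normv v.
  rewrite -sqrtrM ?pullback_eigenvalue_ge0 // ler_wsqrtr // -pullback_quad.
  exact: quad_le_largest_eigenvalue pullback_mx_sym b_largest.
apply: le_of_sqr_le_mul; first by rewrite mulr_ge0 ?sqrtr_ge0 ?normv_ge0.
rewrite sqr_normv v_sqr (le_trans (dotv_le_normv _ _)) // -mulrA mulrCA.
by rewrite ler_wpM2l ?normv_ge0.
Qed.

Hypothesis G_posdef : posdef_mx G.

Lemma pullback_eigenvalue_lt1 : b < 1.
Proof.
case: b_largest => /eigenvalueP[v v_eigen v_neq0] _.
have v_gt0 : 0 < dotv v v by rewrite lt_def dotv_eq0 v_neq0 dotv_ge0.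
have := G_posdef v_neq0; rewrite gtilde_quad v_eigen -scalemxAl mxE.
by rewrite -[X in X - _]mul1r -mulrBl pmulr_lgt0 // subr_gt0.
Qed.

Lemma gtilde_quad_ge (x : 'rV[R]_m) : (1 - b) * dotv x x <= (x *m G *m x^T) 0 0.
Proof.
rewrite gtilde_quad mulrBl mul1r lerD2l lerN2.
exact: quad_le_largest_eigenvalue pullback_mx_sym b_largest.
Qed.

Lemma normv_mul_invmx_le (x : 'rV[R]_m) : normv (x *m invmx G) <= normv x / (1 - b).
Proof.
set y := x *m invmx G.
have x_eq : x = y *m G by rewrite /y mulmxKV // posdef_mx_unit.
have y_sqr_le : (1 - b) * normv y ^+ 2 <= normv x * normv y.
  rewrite sqr_normv (le_trans (gtilde_quad_ge y)) //.
  by rewrite -x_eq; exact: dotv_le_normv.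
rewrite ler_pdivlMr ?subr_gt0 ?pullback_eigenvalue_lt1 //.
have := normv_ge0 x; have := normv_ge0 y; have := pullback_eigenvalue_lt1; nra.
Qed.

Lemma sqrt_sum_sqr_invmx_le :
  Num.sqrt (\sum_i \sum_j invmx G i j ^+ 2) <= Num.sqrt m%:R / (1 - b).
Proof.
have b_lt1 := pullback_eigenvalue_lt1.
have row_le (i : 'I_m) : \sum_j invmx G i j ^+ 2 <= (1 - b)^-2.
  have -> : \sum_j invmx G i j ^+ 2 = normv (row i (invmx G)) ^+ 2.
    by rewrite sqr_normv dotvv; apply: eq_bigr => j _; rewrite mxE.
  rewrite -exprVn ler_pXn2r ?nnegrE ?invr_ge0 ?subr_ge0 ?normv_ge0 ?(ltW b_lt1) //.
  by have := normv_mul_invmx_le (delta_mx 0 i); rewrite normv_delta mul1r -rowE.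
have -> : Num.sqrt m%:R / (1 - b) = Num.sqrt (m%:R * (1 - b)^-2).
  by rewrite sqrtrM ?ler0n // -exprVn sqrtr_sqr ger0_norm // invr_ge0 subr_ge0 ltW.
rewrite ler_wsqrtr // (le_trans (ler_sum _ (fun i _ => row_le i))) //.
by rewrite sumr_const card_ord mulr_natl.
Qed.

Lemma ZvecE (B : 'I_m -> 'I_m -> 'rV[R]_n) :
  Zvec A B = Wvec A B *m A^T *m invmx G.
Proof.
apply/rowP => j; rewrite !mxE; apply: eq_bigr => i _; rewrite mulrC dotvE !mxE.
by congr (_ * _); apply: eq_bigr => k _; rewrite !mxE.
Qed.

End Pullback.

Theorem lemma2p2 (R : realType) (m n : nat) (A : 'M[R]_(m, n))
  (B : 'I_m -> 'I_m -> 'rV[R]_n) (b : R) :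
  (forall i j, B i j = B j i) ->
  posdef_mx (gtilde_mx A) ->
  largest_eigenvalue (pullback_mx A) b ->
  normv (Zvec A B) <= Num.sqrt b / (1 - b) * normv (Wvec A B) /\
  normv (Wvec A B) <= Num.sqrt (m%:R) / (1 - b) * norm2ff B.
Proof.
move=> _ G_posdef b_largest.
have b_lt1 := pullback_eigenvalue_lt1 b_largest G_posdef.
split.
- rewrite ZvecE (le_trans (normv_mul_invmx_le b_largest G_posdef _)) //.
  by rewrite mulrAC ler_pM2r ?invr_gt0 ?subr_gt0 // normv_mul_tr_le.
- have := sqrt_sum_sqr_invmx_le b_largest G_posdef; rewrite pair_bigA /= => Ginv_le.
  rewrite /Wvec /norm2ff !pair_bigA /= (le_trans (normv_sum_scale_le _ _)) //.
  by rewrite ler_wpM2r ?sqrtr_ge0.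
Qed.
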